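(* Let $\sigma$ be a density operator on a finite-dimensional Hilbert space with largest eigenvalue $p_{\max}=\|\sigma\|_\infty<1$ and corresponding eigenvector $|\Phi\rangle$, and let $H$ be Hermitian. Then $$P_H(\sigma)\ge V_H(\Phi)\Big(\frac{p_{\max}^2}{1-p_{\max}}-1\Big).$$
   Context: $V_H(\Phi)=\langle\Phi|H^2|\Phi\rangle-\langle\Phi|H|\Phi\rangle^2$. Purity of coherence: $P_H(\sigma)=\mathrm{Tr}(H\sigma^2H\sigma^{-1})-\mathrm{Tr}(\sigma H^2)$ ($\sigma^{-1}$ inverse on the support) if $\mathrm{supp}(H\sigma H)\subseteq\mathrm{supp}(\sigma)$, else $\infty$. *)

(* matrices over an arbitrary numClosedFieldType C
   (e.g. algC); the Hilbert space is C^n, vectors are column vectors. *)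
From HB Require Import structures.
From mathcomp Require Import all_boot all_order all_algebra.
From Stdlib Require Import ClassicalEpsilon.
Set Implicit Arguments. Unset Strict Implicit. Unset Printing Implicit Defensive.
Import Order.TTheory GRing.Theory Num.Theory.
Local Open Scope ring_scope.

Section Defs.
Variable C : numClosedFieldType.

Definition dagger m n (A : 'M[C]_(m, n)) : 'M[C]_(n, m) := map_mx Num.conj (A^T).

Definition herm_mx n (A : 'M[C]_n) : Prop := dagger A = A.

Definition psd n (A : 'M[C]_n) : Prop :=
  herm_mx A /\ forall v : 'cV[C]_n, 0 <= (dagger v *m A *m v) 0 0.

Definition density n (s : 'M[C]_n) : Prop := psd s /\ \tr s = 1.

Definition expect n (A : 'M[C]_n) (v : 'cV[C]_n) : C := (dagger v *m A *m v) 0 0.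

Definition varH n (H : 'M[C]_n) (Phi : 'cV[C]_n) : C :=
  expect (H *m H) Phi - (expect H Phi) ^+ 2.

(* Moore-Penrose pseudo-inverse conditions (for Hermitian s this is the
   inverse on the support). *)
Definition is_mp_inverse n (s X : 'M[C]_n) : Prop :=
  [/\ s *m X *m s = s, X *m s *m X = X,
      dagger (s *m X) = s *m X & dagger (X *m s) = X *m s].

(* the pseudo-inverse (it exists and is unique) *)
Definition pinv n (s : 'M[C]_n) : 'M[C]_n :=
  epsilon (inhabits 0) (fun X => is_mp_inverse s X).

(* support (= range = column space) inclusion supp A ⊆ supp B,
   column spaces expressed as row spaces of transposes *)
Definition supp_sub n (A B : 'M[C]_n) : bool := (A^T <= B^T)%MS.

(* purity of coherence; None encodes +infinity *)
Definition purity n (H s : 'M[C]_n) : option C :=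
  if supp_sub (H *m s *m H) s
  then Some (\tr (H *m s *m s *m H *m pinv s) - \tr (s *m (H *m H)))
  else None.

Definition ext_ge (P : option C) (x : C) : Prop :=
  match P with None => True | Some p => x <= p end.

(* largest eigenvalue (mxalgebra's eigenvalue; spectrum of a Hermitian
   matrix is the same for row/column conventions) *)
Definition largest_eigenvalue n (s : 'M[C]_n) (p : C) : Prop :=
  eigenvalue s p /\ forall l, eigenvalue s l -> l <= p.

End Defs.

From HB Require Import structures.
From mathcomp Require Import all_boot all_order all_algebra.
From mathcomp Require Import ring.
From Stdlib Require Import ClassicalEpsilon.
Set Implicit Arguments. Unset Strict Implicit. Unset Printing Implicit Defensive.
Import Order.TTheory GRing.Theory Num.Theory.
Local Open Scope ring_scope.

(* In an eigenbasis of sigma, with eigenvalues p_i, and with G the matrix of H in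
   that basis, the purity of coherence is  sum_ij |G_ij|^2 (p_j^2 / p_i - p_i).
   The support condition kills the terms with p_i = 0 < p_j, and symmetrising in
   (i, j) gives the nonnegative weights (p_i + p_j)(p_i - p_j)^2 / (p_i p_j).
   The bound is trivial when p^2/(1-p) - 1 <= 0; otherwise p > 1 - p, so p is a
   simple eigenvalue, Phi is a basis vector e_m up to a phase and
   V_H(Phi) = sum_(j <> m) |G_mj|^2.  Keeping only row and column m of the
   symmetrised sum, each weight is at least p^2/(1-p) - 1, because every other
   eigenvalue is at most 1 - p. *)

Section Dagger.
Variable C : numClosedFieldType.

Lemma dagger_entry m n (A : 'M[C]_(m, n)) i j : dagger A i j = (A j i)^*.
Proof. by rewrite !mxE. Qed.

Lemma daggerM m n p (A : 'M[C]_(m, n)) (B : 'M[C]_(n, p)) :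
  dagger (A *m B) = dagger B *m dagger A.
Proof. by rewrite /dagger trmx_mul map_mxM. Qed.

Lemma daggerK m n (A : 'M[C]_(m, n)) : dagger (dagger A) = A.
Proof. by apply/matrixP=> i j; rewrite !mxE conjCK. Qed.

Lemma daggerB m n (A B : 'M[C]_(m, n)) : dagger (A - B) = dagger A - dagger B.
Proof. by apply/matrixP=> i j; rewrite !mxE rmorphB. Qed.

Lemma daggerZ m n a (A : 'M[C]_(m, n)) : dagger (a *: A) = a^* *: dagger A.
Proof. by apply/matrixP=> i j; rewrite !mxE rmorphM. Qed.

Lemma dagger_diag n (d : 'rV[C]_n) :
  (forall i, d 0 i \is Num.real) -> dagger (diag_mx d) = diag_mx d.
Proof.
move=> d_real; apply/matrixP=> i j; rewrite !mxE.
by case: (eqVneq i j) => [->|_]; rewrite ?mulr1n ?conj_Creal ?mulr0n ?rmorph0.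
Qed.

Lemma herm_entry n (A : 'M[C]_n) i j : herm_mx A -> A j i = (A i j)^*.
Proof. by move=> hA; rewrite -{1}hA dagger_entry. Qed.

Lemma herm_conj m n (V : 'M[C]_(m, n)) (A : 'M[C]_n) :
  herm_mx A -> herm_mx (V *m A *m dagger V).
Proof. by move=> hA; rewrite /herm_mx !daggerM daggerK hA mulmxA. Qed.

Lemma expect_delta n (A : 'M[C]_n) (k : C) (i : 'I_n) :
  expect A (k *: delta_mx i 0) = k^* * k * A i i.
Proof.
have delta_dagger : dagger (delta_mx i 0 : 'cV[C]_n) = delta_mx 0 i.
  apply/matrixP=> a b; rewrite !mxE !ord1 /=.
  by case: (b == i); rewrite /= ?rmorph1 ?rmorph0.
rewrite /expect daggerZ delta_dagger -!scalemxAl -!scalemxAr -rowE -colE.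
by rewrite !mxE mulrA.
Qed.

Lemma mp_inverse_unique n (A X Y : 'M[C]_n) :
  is_mp_inverse A X -> is_mp_inverse A Y -> X = Y.
Proof.
move=> [h1 h2 h3 h4] [k1 k2 k3 k4].
have eA1 : dagger A = dagger A *m (A *m Y) by rewrite -{1}k1 daggerM k3.
have eA2 : dagger A = (X *m A) *m dagger A by rewrite -{1}h1 -mulmxA daggerM h4.
have eX : X = X *m A *m Y.
  have eX0 : X = X *m (dagger X *m dagger A) by rewrite -daggerM h3 mulmxA h2.
  by rewrite {1}eX0 {1}eA1 (mulmxA (dagger X)) -daggerM h3 !mulmxA h2.
have eY : Y = X *m A *m Y.
  have eY0 : Y = dagger A *m dagger Y *m Y by rewrite -daggerM k4 k2.
  rewrite {1}eY0 {1}eA2 -(mulmxA (X *m A) (dagger A) (dagger Y)) -daggerM k4.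
  by rewrite -!mulmxA (mulmxA Y) k2.
by rewrite eX -eY.
Qed.

Lemma pinv_mp_inverse n (A X : 'M[C]_n) : is_mp_inverse A X -> pinv A = X.
Proof.
move=> hX; apply: (mp_inverse_unique _ hX).
exact: epsilon_spec (inhabits 0) (is_mp_inverse A) (ex_intro _ X hX).
Qed.

Lemma is_mp_inverse_diag n (d : 'rV[C]_n) : (forall i, d 0 i \is Num.real) ->
  is_mp_inverse (diag_mx d) (diag_mx (map_mx GRing.inv d)).
Proof.
move=> d_real; have e_real i : map_mx GRing.inv d 0 i \is Num.real.
  by rewrite mxE rpredV.
rewrite /is_mp_inverse !mulmx_diag; split; last 2 first.
- by apply: dagger_diag => i; rewrite mxE rpredM.
- by apply: dagger_diag => i; rewrite mxE rpredM.
- congr diag_mx; apply/rowP=> j; rewrite !mxE.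
  have [->|dn0] := eqVneq (d 0 j) 0; first by rewrite !mul0r.
  by rewrite divff ?mul1r.
- congr diag_mx; apply/rowP=> j; rewrite !mxE.
  have [->|dn0] := eqVneq (d 0 j) 0; first by rewrite invr0 !mul0r.
  by rewrite mulVf ?mul1r.
Qed.

End Dagger.

Section UnitaryConjugation.
Variables (C : numClosedFieldType) (n : nat) (U : 'M[C]_n).
Hypothesis U_unitary : U *m dagger U = 1%:M.

Lemma conj_mulmx (A B : 'M[C]_n) :
  (dagger U *m A *m U) *m (dagger U *m B *m U) = dagger U *m (A *m B) *m U.
Proof.
by rewrite -!mulmxA; congr (_ *m _); rewrite !mulmxA -(mulmxA A) U_unitary mulmx1.
Qed.

Lemma conj_trace (A : 'M[C]_n) : \tr (dagger U *m A *m U) = \tr A.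
Proof. by rewrite mxtrace_mulC mulmxA U_unitary mul1mx. Qed.

Lemma is_mp_inverse_conj (A X : 'M[C]_n) :
  is_mp_inverse A X -> is_mp_inverse (dagger U *m A *m U) (dagger U *m X *m U).
Proof.
have dagger_conj (B : 'M[C]_n) : dagger (dagger U *m B *m U) = dagger U *m dagger B *m U.
  by rewrite !daggerM daggerK mulmxA.
by case=> h1 h2 h3 h4; split; rewrite !conj_mulmx ?dagger_conj ?h1 ?h2 ?h3 ?h4.
Qed.

Lemma expect_conj (A : 'M[C]_n) (v : 'cV[C]_n) :
  expect (dagger U *m A *m U) v = expect A (U *m v).
Proof. by rewrite /expect daggerM !mulmxA. Qed.

Lemma varH_conj (A : 'M[C]_n) (v : 'cV[C]_n) :
  varH (dagger U *m A *m U) v = varH A (U *m v).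
Proof. by rewrite /varH conj_mulmx !expect_conj. Qed.

End UnitaryConjugation.

Section Variance.
Variables (C : numClosedFieldType) (n : nat) (A : 'M[C]_n) (v : 'cV[C]_n).
Hypothesis A_herm : herm_mx A.
Hypothesis v_unit : (dagger v *m v) 0 0 = 1.

Lemma varH_ge0 : 0 <= varH A v.
Proof.
set mu := expect A v; set w := A *m v - mu *: v.
have dagger_w : dagger w = dagger v *m A - mu^* *: dagger v.
  by rewrite /w daggerB daggerZ daggerM A_herm.
have -> : varH A v = (dagger w *m w) 0 0.
  have mu_def : (dagger v *m A *m v) 0 0 = mu by [].
  rewrite dagger_w /w mulmxBl !mulmxBr -!scalemxAl -!scalemxAr !mulmxA scalerA.
  rewrite /varH /expect !mulmxA mu_def; move: mu_def v_unit; clearbody mu.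
  move: (dagger v *m A *m A *m v) (dagger v *m A *m v) (dagger v *m v).
  by move=> P2 P1 N P1_mu N_unit; rewrite !mxE P1_mu N_unit; ring.
rewrite mxE sumr_ge0 // => i _; rewrite !mxE mulrC; exact: mul_conjC_ge0.
Qed.

Lemma varH_basis m : v = v m 0 *: delta_mx m 0 ->
  varH A v = \sum_(j | j != m) `|A m j| ^+ 2.
Proof.
move=> vE; have phase_unit : (v m 0)^* * v m 0 = 1.
  have := expect_delta 1%:M (v m 0) m.
  by rewrite -vE /expect mulmx1 v_unit mxE eqxx mulr1n mulr1.
rewrite /varH vE !expect_delta phase_unit !mul1r mxE (bigD1 m) //=.
rewrite -expr2 addrAC subrr add0r; apply: eq_bigr => j _.
by rewrite normCK (herm_entry m j A_herm).
Qed.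

End Variance.

Section CoherenceWeight.
Variable C : numClosedFieldType.

(* At [x = 0] the weight is [0], since [0^-1 = 0]. *)
Definition coh_weight (x y : C) : C := y ^+ 2 / x - x.

Lemma coh_weight_sym_ge0 (x y : C) : 0 < x -> 0 < y ->
  0 <= coh_weight x y + coh_weight y x.
Proof.
move=> x_gt0 y_gt0; rewrite /coh_weight.
have -> : y ^+ 2 / x - x + (x ^+ 2 / y - y) = (x + y) * (x - y) ^+ 2 / (x * y).
  by field; rewrite !lt0r_neq0.
have sqr_ge0 : 0 <= (x - y) ^+ 2.
  by rewrite real_exprn_even_ge0 // rpredB ?gtr0_real.
apply: divr_ge0; last exact: mulr_ge0 (ltW x_gt0) (ltW y_gt0).
exact: mulr_ge0 (addr_ge0 (ltW x_gt0) (ltW y_gt0)) sqr_ge0.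
Qed.

Lemma coh_weight_sym_ge (p y : C) : 0 < p -> p < 1 -> 0 < y -> y <= 1 - p ->
  p ^+ 2 / (1 - p) - 1 <= coh_weight p y + coh_weight y p.
Proof.
move=> p_gt0 p_lt1 y_gt0 y_le; rewrite -subr_ge0 /coh_weight.
have q_gt0 : 0 < 1 - p by rewrite subr_gt0.
have -> : y ^+ 2 / p - p + (p ^+ 2 / y - y) - (p ^+ 2 / (1 - p) - 1)
    = p ^+ 2 * (y^-1 - (1 - p)^-1) + y ^+ 2 / p + (1 - p - y).
  by field; rewrite !lt0r_neq0.
apply: addr_ge0; last by rewrite subr_ge0.
apply: addr_ge0; last exact: divr_ge0 (exprn_ge0 _ (ltW y_gt0)) (ltW p_gt0).
apply: mulr_ge0; first exact: exprn_ge0 (ltW p_gt0).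
by rewrite subr_ge0 lef_pV2 ?posrE.
Qed.

Lemma coh_bound_gt0_dominant (p : C) : 0 <= p -> p < 1 ->
  0 < p ^+ 2 / (1 - p) - 1 -> 1 - p < p.
Proof.
move=> p_ge0 p_lt1; rewrite subr_gt0 ltr_pdivlMr ?subr_gt0 // mul1r => lt_sq.
by apply: lt_le_trans lt_sq _; rewrite expr2 ler_piMr // ltW.
Qed.

End CoherenceWeight.

Section Eigenbasis.
Variables (C : numClosedFieldType) (n : nat).
Implicit Types (d : 'rV[C]_n) (G : 'M[C]_n).

Definition coh_sum d G : C :=
  \sum_i \sum_j `|G i j| ^+ 2 * coh_weight (d 0 i) (d 0 j).

Lemma trace_purity_diag d G : herm_mx G ->
  \tr (G *m diag_mx d *m diag_mx d *m G *m diag_mx (map_mx GRing.inv d))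
    - \tr (diag_mx d *m (G *m G)) = coh_sum d G.
Proof.
move=> G_herm; rewrite /coh_sum /mxtrace -sumrB; apply: eq_bigr => i _.
rewrite mul_mx_diag mul_diag_mx !mxE big_distrl big_distrr -sumrB.
apply: eq_bigr => j _; rewrite !mul_mx_diag !mxE normCK -(herm_entry _ _ G_herm).
rewrite /coh_weight /=; ring.
Qed.

Lemma herm_diag_quad_eq0 d G i j : (forall k, 0 <= d 0 k) -> herm_mx G ->
  (G *m diag_mx d *m G) i i = 0 -> d 0 j != 0 -> G i j = 0.
Proof.
move=> d_ge0 G_herm; rewrite mxE => quad_eq0 dj_neq0.
have term_ge0 k : true -> 0 <= d 0 k * (G i k * (G i k)^*).
  by move=> _; rewrite mulr_ge0 ?mul_conjC_ge0.
have sum_eq0 : \sum_k d 0 k * (G i k * (G i k)^*) = 0.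
  rewrite -[X in _ = X]quad_eq0; apply: eq_bigr => k _.
  by rewrite mul_mx_diag mxE (herm_entry i k G_herm) mulrCA mulrA.
have /eqP := psumr_eq0P term_ge0 sum_eq0 (i := j) isT.
by rewrite mulf_eq0 (negPf dj_neq0) mul_conjC_eq0 => /eqP.
Qed.

Lemma supp_sub_conj_diag (U : 'M[C]_n) d G :
  U *m dagger U = 1%:M -> (forall k, 0 <= d 0 k) -> herm_mx G ->
  let sigma := dagger U *m diag_mx d *m U in
  let H := dagger U *m G *m U in
  supp_sub (H *m sigma *m H) sigma ->
  forall i j, d 0 i = 0 -> d 0 j != 0 -> G i j = 0.
Proof.
move=> U_unitary d_ge0 G_herm sigma H /submxP[N HsH] i j di0 dj_neq0.
have unconjugate (A : 'M[C]_n) : U *m (dagger U *m A *m U) *m dagger U = A.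
  by rewrite !mulmxA U_unitary mul1mx -mulmxA U_unitary mulmx1.
have GDG : G *m diag_mx d *m G = diag_mx d *m (U *m N^T *m dagger U).
  rewrite -[LHS]unconjugate -!conj_mulmx // -/sigma -/H.
  rewrite -[H *m sigma *m H]trmxK HsH trmx_mul trmxK.
  by rewrite /sigma !mulmxA U_unitary mul1mx.
apply: herm_diag_quad_eq0 d_ge0 G_herm _ dj_neq0.
by rewrite GDG mul_diag_mx mxE di0 mul0r.
Qed.

Lemma purity_trace_conj_diag (U : 'M[C]_n) d G :
  U *m dagger U = 1%:M -> (forall i, d 0 i \is Num.real) -> herm_mx G ->
  let sigma := dagger U *m diag_mx d *m U in
  let H := dagger U *m G *m U in
  \tr (H *m sigma *m sigma *m H *m pinv sigma) - \tr (sigma *m (H *m H))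
    = coh_sum d G.
Proof.
move=> U_unitary d_real G_herm sigma H.
rewrite (pinv_mp_inverse (is_mp_inverse_conj U_unitary (is_mp_inverse_diag d_real))).
by rewrite !conj_mulmx // !conj_trace // trace_purity_diag.
Qed.

End Eigenbasis.

Section CoherenceSum.
Variables (C : numClosedFieldType) (n : nat) (d : 'rV[C]_n) (G : 'M[C]_n).
Hypothesis d_ge0 : forall i, 0 <= d 0 i.
Hypothesis G_herm : herm_mx G.
Hypothesis G_supp : forall i j, d 0 i = 0 -> d 0 j != 0 -> G i j = 0.

Let coh_sym i j :=
  `|G i j| ^+ 2 * (coh_weight (d 0 i) (d 0 j) + coh_weight (d 0 j) (d 0 i)).

Let norm_herm i j : `|G j i| = `|G i j|.
Proof. by rewrite (herm_entry i j G_herm) norm_conjC. Qed.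

Let coh_symC i j : coh_sym i j = coh_sym j i.
Proof. by rewrite /coh_sym norm_herm addrC. Qed.

Let coh_sym_ge0 i j : 0 <= coh_sym i j.
Proof.
rewrite /coh_sym; have [di0|di_neq0] := eqVneq (d 0 i) 0.
  have [dj0|dj_neq0] := eqVneq (d 0 j) 0.
    by rewrite di0 dj0 /coh_weight expr0n !mul0r subrr addr0 mulr0.
  by rewrite G_supp // normr0 expr0n mul0r.
have [dj0|dj_neq0] := eqVneq (d 0 j) 0.
  by rewrite -norm_herm G_supp // normr0 expr0n mul0r.
by rewrite mulr_ge0 ?exprn_ge0 // coh_weight_sym_ge0 // lt0r ?di_neq0 ?dj_neq0 ?d_ge0.
Qed.

Lemma coh_sum_sym : coh_sum d G *+ 2 = \sum_i \sum_j coh_sym i j.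
Proof.
rewrite mulr2n [X in _ + X]exchange_big -big_split; apply: eq_bigr => i _.
rewrite -big_split; apply: eq_bigr => j _.
by rewrite /= /coh_sym norm_herm -mulrDr.
Qed.

Lemma coh_sum_ge0 : 0 <= coh_sum d G.
Proof.
rewrite -(pmulrn_lge0 _ (isT : (0 < 2)%N)) coh_sum_sym.
by do 2![apply: sumr_ge0 => ? _].
Qed.

Lemma coh_sum_ge_row m : \sum_(j | j != m) coh_sym m j <= coh_sum d G.
Proof.
suff: (\sum_(j | j != m) coh_sym m j) *+ 2 <= coh_sum d G *+ 2 by rewrite lerMn2r.
rewrite coh_sum_sym mulr2n [X in _ <= X](bigD1 m) //=.
apply: lerD; first by rewrite [X in _ <= X](bigD1 m) //= lerDr.
apply: ler_sum => i i_neq_m; rewrite coh_symC (bigD1 m) //= lerDl.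
exact: sumr_ge0.
Qed.

Lemma coh_sum_ge_var m p : d 0 m = p -> 0 < p -> p < 1 ->
    (forall j, j != m -> d 0 j <= 1 - p) ->
  (\sum_(j | j != m) `|G m j| ^+ 2) * (p ^+ 2 / (1 - p) - 1) <= coh_sum d G.
Proof.
move=> dm p_gt0 p_lt1 d_le; rewrite mulr_suml.
apply: le_trans (coh_sum_ge_row m); apply: ler_sum => j j_neq_m.
have [dj0|dj_neq0] := eqVneq (d 0 j) 0.
  by rewrite /coh_sym -norm_herm G_supp ?dm ?lt0r_neq0 // normr0 expr0n !mul0r.
rewrite /coh_sym dm ler_wpM2l ?exprn_ge0 // coh_weight_sym_ge ?d_le //.
by rewrite lt0r dj_neq0 d_ge0.
Qed.

End CoherenceSum.

Section Spectrum.
Variables (C : numClosedFieldType) (n : nat).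

Lemma herm_spectral (A : 'M[C]_n) : herm_mx A ->
  exists U (d : 'rV[C]_n), [/\ U *m dagger U = 1%:M, dagger U *m U = 1%:M
                            & A = dagger U *m diag_mx d *m U].
Proof.
move=> A_herm; set U := spectralmx A.
have U_unitary : U \is unitarymx by exact: spectral_unitarymx.
have A_normal : A \is normalmx by apply/normalmxP; rewrite -[_ ^t*%sesqui]/(dagger A) A_herm.
exists U, (spectral_diag A); split.
- exact/unitarymxP.
- by have := mulmxKtV (1%:M : 'M[C]_n) U_unitary erefl; rewrite mul1mx.
- by rewrite {1}(orthomx_spectralP A_normal) invmx_unitary.
Qed.

Lemma density_conj_diag (U : 'M[C]_n) (d : 'rV[C]_n) : U *m dagger U = 1%:M ->
  density (dagger U *m diag_mx d *m U) ->
  (forall i, 0 <= d 0 i) /\ \sum_i d 0 i = 1.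
Proof.
move=> U_unitary [[_ psd_sigma] tr_sigma]; split.
  move=> i; have := psd_sigma (dagger U *m (1 *: delta_mx i 0)).
  rewrite -/(expect _ _) expect_conj // mulmxA U_unitary mul1mx expect_delta.
  by rewrite conjC1 !mul1r mxE eqxx mulr1n.
by rewrite -mxtrace_diag -(conj_trace U_unitary).
Qed.

Lemma diag_eigenvector_dominant (d : 'rV[C]_n) (p : C) (v : 'cV[C]_n) :
    (forall i, 0 <= d 0 i) -> \sum_i d 0 i = 1 -> 1 - p < p ->
    diag_mx d *m v = p *: v -> v != 0 ->
  exists m, [/\ d 0 m = p, forall j, j != m -> d 0 j <= 1 - p
              & v = v m 0 *: delta_mx m 0].
Proof.
move=> d_ge0 sum_d p_dominant v_eigen v_neq0.
have eigen_entry i : v i 0 != 0 -> d 0 i = p.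
  move=> vi_neq0; apply: (mulIf vi_neq0).
  by have := congr1 (fun w : 'cV[C]_n => w i 0) v_eigen; rewrite mul_diag_mx !mxE.
have [m vm_neq0] : exists m, v m 0 != 0.
  apply/existsP; apply: contraR v_neq0 => /existsPn v0.
  by apply/eqP/matrixP => i j; rewrite ord1 mxE; apply/eqP/negPn/v0.
have dm := eigen_entry m vm_neq0.
have d_le j : j != m -> d 0 j <= 1 - p.
  move=> j_neq_m; rewrite -sum_d (bigD1 m) //= (bigD1 j) //= dm.
  by rewrite addrAC subrr add0r lerDl sumr_ge0.
exists m; split=> //; apply/matrixP=> i j; rewrite ord1 !mxE.
have [->|i_neq_m] := eqVneq i m; first by rewrite mulr1.
rewrite mulr0; apply/eqP; apply: contraTT (le_lt_trans (d_le i i_neq_m) p_dominant).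
by move/eigen_entry ->; rewrite ltxx.
Qed.

End Spectrum.

Lemma varH_coh_sum_bound (C : numClosedFieldType) n (d : 'rV[C]_n) (G : 'M[C]_n)
    (p : C) (phi : 'cV[C]_n) :
  (forall i, 0 <= d 0 i) -> \sum_i d 0 i = 1 -> herm_mx G ->
  (forall i j, d 0 i = 0 -> d 0 j != 0 -> G i j = 0) ->
  0 <= p -> p < 1 -> diag_mx d *m phi = p *: phi -> (dagger phi *m phi) 0 0 = 1 ->
  varH G phi * (p ^+ 2 / (1 - p) - 1) <= coh_sum d G.
Proof.
move=> d_ge0 sum_d G_herm G_supp p_ge0 p_lt1 phi_eigen phi_unit.
have K_real : p ^+ 2 / (1 - p) - 1 \is Num.real.
  by rewrite !(rpredB, rpredM, rpredV, rpredX, real1) ?ger0_real.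
have [K_le0|K_gt0] := real_leP K_real (real0 C).
  apply: le_trans (coh_sum_ge0 d_ge0 G_herm G_supp).
  exact: mulr_ge0_le0 (varH_ge0 G_herm phi_unit) K_le0.
have p_dominant := coh_bound_gt0_dominant p_ge0 p_lt1 K_gt0.
have phi_neq0 : phi != 0.
  apply/eqP=> phi0; move: phi_unit; rewrite phi0 mulmx0 mxE => /eqP.
  by rewrite eq_sym oner_eq0.
have [m [dm d_le phiE]] :=
  diag_eigenvector_dominant d_ge0 sum_d p_dominant phi_eigen phi_neq0.
rewrite (varH_basis G_herm phi_unit phiE) coh_sum_ge_var //.
by apply: lt_trans p_dominant; rewrite subr_gt0.
Qed.

Theorem mainTheorem17 (C : numClosedFieldType) (n : nat)
    (sigma H : 'M[C]_n) (pmax : C) (Phi : 'cV[C]_n) :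
  density sigma ->
  largest_eigenvalue sigma pmax ->
  pmax < 1 ->
  sigma *m Phi = pmax *: Phi ->
  (dagger Phi *m Phi) 0 0 = 1 ->
  herm_mx H ->
  ext_ge (purity H sigma) (varH H Phi * (pmax ^+ 2 / (1 - pmax) - 1)).
Proof.
move=> sigma_density _ p_lt1 Phi_eigen Phi_unit H_herm.
rewrite /ext_ge /purity; case: ifP => // supp.
have [[sigma_herm sigma_psd] _] := sigma_density.
have p_ge0 : 0 <= pmax.
  by have := sigma_psd Phi; rewrite -mulmxA Phi_eigen -scalemxAr mxE Phi_unit mulr1.
have [U [d [UUd UdU sigmaE]]] := herm_spectral sigma_herm.
set G := U *m H *m dagger U.
have HE : H = dagger U *m G *m U.
  by rewrite /G !mulmxA UdU mul1mx -mulmxA UdU mulmx1.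
have G_herm : herm_mx G by apply: herm_conj.
rewrite {}sigmaE in sigma_density supp Phi_eigen *; rewrite {}HE in supp *.
have [d_ge0 sum_d] := density_conj_diag UUd sigma_density.
have G_supp := supp_sub_conj_diag UUd d_ge0 G_herm supp.
rewrite purity_trace_conj_diag // => [|i]; last exact: ger0_real.
rewrite varH_conj //; apply: varH_coh_sum_bound => //.
- by have := congr1 (mulmx U) Phi_eigen; rewrite !mulmxA UUd mul1mx -scalemxAr.
- by rewrite daggerM -mulmxA (mulmxA (dagger U)) UdU mul1mx.
Qed.
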